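(* Let $(X,d)$ be a bounded metric space and let $M: X\to\mathbb{R}$ satisfy $d(x,y)\le M(x)\le d(x,z)+M(z)$ for all $x,y,z\in X$. Let $d_S$ be the subset distance on $\mathcal{F}(X)$ defined in the context. Let $X_1,X_2\in\mathcal{F}(X)$ with $|X_1|\le|X_2|$, and let $X_2'\subseteq X_2$ satisfy $|X_1|\le|X_2'|$. Then $d_S(X_1,X_2')\le d_S(X_1,X_2)$.
   Context: $\mathcal{F}(X)$ denotes the set of all finite subsets of $X$. For $A,B\in\mathcal{F}(X)$ with $|A|\le|B|$ and an injection $\chi:A\to B$, define $d_\chi(A,B)=\sum_{x\in A} d(x,\chi(x))+\sum_{y\in B\setminus\chi(A)} M(y)$. The subset distance is $d_S(A,B)=d_S(B,A)=\min\{d_\chi(A,B) : \chi:A\to B \text{ an injection}\}$ (for $|A|\le|B|$). *)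

From HB Require Import structures.
From mathcomp Require Import all_boot all_order all_algebra.
From mathcomp Require Import finmap.
Set Implicit Arguments. Unset Strict Implicit. Unset Printing Implicit Defensive.
Import Order.TTheory GRing.Theory Num.Theory.
Local Open Scope ring_scope.


Definition is_metric (R : realFieldType) (X : Type) (d : X -> X -> R) : Prop :=
  (forall x y, 0 <= d x y) /\ (forall x y, d x y = 0 <-> x = y) /\
  (forall x y, d x y = d y x) /\ (forall x y z, d x z <= d x y + d y z).

Definition bounded_metric (R : realFieldType) (X : Type) (d : X -> X -> R) : Prop :=
  exists C : R, forall x y, d x y <= C.

Definition d_chi (R : realFieldType) (X : choiceType) (d : X -> X -> R) (M : X -> R)
  (A B : {fset X}) (chi : {ffun A -> B}) : R :=
  \sum_(a : A) d (val a) (val (chi a)) +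
  \sum_(b : B | b \notin codom chi) M (val b).

(* min over all injections chi : A -> B (meaningful when #|A| <= #|B|,
   where injections exist; otherwise the list is empty and value is 0). *)
Definition dS_ord (R : realFieldType) (X : choiceType) (d : X -> X -> R) (M : X -> R)
  (A B : {fset X}) : R :=
  let vals := [seq d_chi d M f | f <- enum [pred f : {ffun A -> B} | injectiveb f]] in
  foldr Num.min (head 0 vals) vals.

Definition dS (R : realFieldType) (X : choiceType) (d : X -> X -> R) (M : X -> R)
  (A B : {fset X}) : R :=
  if (#|` A| <= #|` B|)%N then dS_ord d M A B else dS_ord d M B A.

From mathcomp Require Import all_boot all_order all_algebra.
From mathcomp Require Import finmap lra zify.
Import Order.TTheory GRing.Theory Num.Theory.
Set Implicit Arguments. Unset Strict Implicit. Unset Printing Implicit Defensive.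
Local Open Scope fset_scope.
Local Open Scope ring_scope.

(* Start from an optimal matching chi of X1 into X2.  As long as some x in X1 is
   matched to a point outside X2', counting shows that some z in X2' is still
   unmatched; rematching x to z replaces d(x, chi x) + M(z) by d(x, z) <= M(z),
   so the cost does not increase.  The resulting matching lands in X2', and
   forgetting the unmatched points of X2 outside X2' (where M >= 0) can only
   lower the cost further. *)

Lemma foldr_min_le (R : realDomainType) (s : seq R) h v :
  v \in s -> foldr Num.min h s <= v.
Proof.
elim: s => //= y s IH; rewrite inE => /predU1P[->|vs]; first by rewrite ge_min lexx.
by rewrite ge_min IH ?orbT.
Qed.

Lemma foldr_min_mem (R : realDomainType) (s : seq R) h : foldr Num.min h s \in h :: s.
Proof.
elim: s => /= [|y s IH]; first by rewrite mem_seq1.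
rewrite minElt; case: ifP => _; first by rewrite !inE eqxx orbT.
by move: IH; rewrite !inE => /predU1P[->|->]; rewrite ?eqxx ?orbT.
Qed.

Lemma foldr_min_head_mem (R : realDomainType) (s : seq R) x0 x :
  x \in s -> foldr Num.min (head x0 s) s \in s.
Proof.
case: s => // y s _; have := foldr_min_mem (y :: s) y.
by rewrite inE => /predU1P[->|//]; apply: mem_head.
Qed.

Lemma exists_injective_ffun (X : choiceType) (A B : {fset X}) :
  (#|` A| <= #|` B|)%N -> exists f : {ffun A -> B}, injective f.
Proof.
rewrite !cardfE => le_AB.
exists [ffun a => enum_val (widen_ord le_AB (enum_rank a))] => a b.
by rewrite !ffunE => /enum_val_inj /(congr1 val) /= /val_inj; apply: enum_rank_inj.
Qed.

Section Matchings.
Variables (R : realFieldType) (X : choiceType) (d : X -> X -> R) (M : X -> R).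

(* The cost of d_chi, for an arbitrary map g : X -> X, so that the repair
   can go through maps that do not (yet) send A into B. *)
Definition cost (A B : {fset X}) (g : X -> X) : R :=
  \sum_(a <- A) d a (g a) + \sum_(b <- B | b \notin g @` A) M b.

Lemma d_chi_cost (A B : {fset X}) (f : {ffun A -> B}) (g : X -> X) :
  (forall a : A, val (f a) = g (val a)) -> d_chi d M f = cost A B g.
Proof.
move=> fg; rewrite /d_chi /cost !big_seq_fsetE /=; congr (_ + _).
  by apply: eq_bigr => a _; rewrite fg.
apply: eq_bigl => b; congr negb; apply/codomP/imfsetP => [[a ->]|[a aA gab]].
  by exists (val a); [exact: fsvalP | exact: fg].
by exists [` aA]; apply: val_inj; rewrite (fg [` aA]) -gab.
Qed.

Lemma dS_ord_le_cost (A B : {fset X}) (g : X -> X) :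
  {in A &, injective g} -> {in A, forall a, g a \in B} ->
  dS_ord d M A B <= cost A B g.
Proof.
move=> g_inj gB; pose f := [ffun a : A => [` gB _ (fsvalP a)]].
have fg (a : A) : val (f a) = g (val a) by rewrite ffunE.
have f_inj : injective f.
  by move=> a b fab; apply: val_inj; apply: g_inj; rewrite ?fsvalP // -!fg fab.
rewrite -(d_chi_cost fg); apply: foldr_min_le; apply: map_f.
by rewrite mem_enum inE; apply/injectiveP.
Qed.

Lemma dS_ord_eq_cost (A B : {fset X}) : (#|` A| <= #|` B|)%N ->
  exists g : X -> X, [/\ {in A &, injective g}, {in A, forall a, g a \in B}
                       & dS_ord d M A B = cost A B g].
Proof.
move=> le_AB; rewrite /dS_ord.
set vals := map _ _.
have [f0 f0_inj] := exists_injective_ffun le_AB.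
have vals_attained : foldr Num.min (head 0 vals) vals \in vals.
  apply: (foldr_min_head_mem _ (x := d_chi d M f0)).
  by rewrite map_f // mem_enum inE; apply/injectiveP.
case/mapP: vals_attained => f; rewrite mem_enum inE => /injectiveP f_inj ->.
pose g x := oapp (fun a => val (f a)) x (insub x).
have fg (a : A) : val (f a) = g (val a) by rewrite /g valK.
exists g; split; last exact: d_chi_cost.
- move=> x y xA yA; rewrite -[x]/(val [` xA]) -[y]/(val [` yA]) -!fg.
  by move/val_inj/f_inj => [].
- by move=> x xA; rewrite -[x]/(val [` xA]) -fg fsvalP.
Qed.

Lemma cost_fsubset (A B' B : {fset X}) (g : X -> X) :
  (forall b, 0 <= M b) -> B' `<=` B -> cost A B' g <= cost A B g.
Proof.
move=> M_ge0 sB'B; rewrite lerD2l (big_fsetIDcond _ (mem B') B) /=.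
have -> : [fset b in B | b \in B'] = B'.
  by apply/fsetP => b; rewrite !inE /= andb_idl // => /(fsubsetP sB'B).
by rewrite lerDl sumr_ge0.
Qed.

Section Repair.
Hypothesis d_ge0 : forall x y, 0 <= d x y.
Hypothesis d_le_M : forall x z, d x z <= M z.

Section Reassign.
Variables (A B : {fset X}) (g : X -> X).

Lemma exists_unmatched x : (#|` A| <= #|` B|)%N -> {in A &, injective g} ->
  x \in A -> g x \notin B -> exists2 z, z \in B & z \notin g @` A.
Proof.
move=> le_AB g_inj xA gxB; apply/fsubsetPn/negP => sBgA.
have : B `<=` g @` A `\ g x.
  apply/fsubsetP => b bB; rewrite in_fsetD1 (fsubsetP sBgA) // andbT.
  by apply: contraNneq gxB => <-.
move/fsubset_leq_card; have := cardfsD1 (g x) (g @` A).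
rewrite in_imfset // (eqP (introT (card_in_imfsetP _ _) g_inj)) /=; lia.
Qed.

Variables (x z : X).
Let g' := [eta g with x |-> z].

Lemma reassign_injective : {in A &, injective g} -> z \notin g @` A ->
  {in A &, injective g'}.
Proof.
move=> g_inj zgA a b aA bA; rewrite /g' /=.
case: eqP => [->|ax]; case: eqP => [->|bx] //; last exact: g_inj.
- by move=> z_gb; rewrite z_gb in_imfset in zgA.
- by move=> ga_z; rewrite -ga_z in_imfset in zgA.
Qed.

Lemma reassign_misplaced : z \in B ->
  [fset a in A | g' a \notin B] = [fset a in A | g a \notin B] `\ x.
Proof.
move=> zB; apply/fsetP => a; rewrite !inE /= /g'.
by case: eqP => [->|_] /=; rewrite ?zB ?andbF.
Qed.

Lemma reassign_image_outside b : x \in A -> g x \notin B -> b \in B -> b != z ->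
  (b \in g' @` A) = (b \in g @` A).
Proof.
move=> xA gxB bB bz; apply/imfsetP/imfsetP => -[a aA b_ga]; exists a => //.
  by move: b_ga; rewrite /g' /=; case: eqP => // _ b_z; rewrite b_z eqxx in bz.
by rewrite b_ga /g' /=; case: eqP => // ax; rewrite -ax -b_ga bB in gxB.
Qed.

Lemma cost_reassign : x \in A -> g x \notin B -> z \in B -> z \notin g @` A ->
  cost A B g' <= cost A B g.
Proof.
move=> xA gxB zB zgA.
have z_g'A : z \in g' @` A by apply/imfsetP; exists x; rewrite //= eqxx.
have g'x : g' x = z by rewrite /g' /= eqxx.
have sum_rest : \sum_(a <- A `\ x) d a (g' a) = \sum_(a <- A `\ x) d a (g a).
  by apply: eq_fbigr => a /fsetD1P[ax _] _; rewrite /g' /= (negPf ax).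
have sum_unmatched : \sum_(b <- B | b \notin g @` A) M b =
                     M z + \sum_(b <- B | b \notin g' @` A) M b.
  rewrite big_mkcond [X in _ = _ + X]big_mkcond !(big_fsetD1 z zB) /= zgA z_g'A add0r.
  by congr (_ + _); apply: eq_fbigr => b /fsetD1P[bz bB] _; rewrite reassign_image_outside.
rewrite /cost !(big_fsetD1 x xA) g'x sum_rest sum_unmatched /=.
have := d_le_M x z; have := d_ge0 x (g x); lra.
Qed.

End Reassign.

Lemma exists_injective_into_cost_le (A B : {fset X}) (g : X -> X) :
  (#|` A| <= #|` B|)%N -> {in A &, injective g} ->
  exists g' : X -> X, [/\ {in A &, injective g'}, {in A, forall a, g' a \in B}
                        & cost A B g' <= cost A B g].
Proof.
move=> le_AB; have [n] := ubnP #|` [fset a in A | g a \notin B]|.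
elim: n g => // n IH g; case: (fset_0Vmem [fset a in A | g a \notin B]) => [none|[x]].
  move=> _ g_inj; exists g; split=> // a aA; apply: contraT => gaB.
  by rewrite -(in_fset0 a) -none !inE /= aA.
rewrite !inE /= => /andP[xA gxB] lt_n g_inj.
have [z zB zgA] := exists_unmatched le_AB g_inj xA gxB.
have [|g' [g'_inj g'B g'_cost]] := IH _ _ (reassign_injective (x := x) g_inj zgA).
  rewrite reassign_misplaced //; have := cardfsD1 x [fset a in A | g a \notin B].
  by rewrite !inE /= xA gxB /=; lia.
by exists g'; split => //; apply: le_trans g'_cost (cost_reassign xA gxB zB zgA).
Qed.

End Repair.

End Matchings.

Theorem corollary2p4 (R : realFieldType) (X : choiceType) (d : X -> X -> R) (M : X -> R)
  (hd : is_metric d) (hb : bounded_metric d)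
  (hM : forall x y z, d x y <= M x /\ M x <= d x z + M z)
  (X1 X2 X2' : {fset X})
  (h12 : (#|` X1| <= #|` X2|)%N) (hsub : (X2' `<=` X2)%fset) (h12' : (#|` X1| <= #|` X2'|)%N) :
  dS d M X1 X2' <= dS d M X1 X2.
Proof.
have [d_ge0 [_ [d_sym _]]] := hd.
have d_le_M x z : d x z <= M z by rewrite d_sym; case: (hM z x z).
have M_ge0 b : 0 <= M b := le_trans (d_ge0 b b) (d_le_M b b).
rewrite /dS h12 h12'.
have [g [g_inj _ ->]] := dS_ord_eq_cost d M h12.
have [g' [g'_inj g'X2' g'_cost]] := exists_injective_into_cost_le d_ge0 d_le_M h12' g_inj.
apply: le_trans (dS_ord_le_cost d M g'_inj g'X2') _.
exact: le_trans g'_cost (cost_fsubset _ _ _ M_ge0 hsub).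
Qed.
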